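(* Let $p\ge1$, $n\ge1$, and $u\in X^n\setminus\{0^n\}$ with decomposition $u=0^ka_1u_1a_2u_2\cdots a_tu_t$. Let $\mathcal P^u_n=(P^n_1(u),\dots,P^n_{m_u}(u))$ be the path of cycles of $u$ in $\Gamma^p_n$. Then: (1) $m_u=t$; (2) for each $j=1,\dots,t$, writing $N_j=k+j+\sum_{\ell=1}^j|u_\ell|$, the cycle $P^n_j(u)$ is the $e_{a_j}$-cycle with vertex set $\{0,a_j\}^{N_j}a_{j+1}u_{j+1}\cdots a_tu_t$ (so in particular $P^n_t(u)=C_n^{a_t}$); (3) the sequence of lengths is $\mathcal L^u_n=(2^{N_1},2^{N_2},\dots,2^{N_t})$, with $2^{N_t}=2^n$.
   Context: $X=\{0,1,\dots,p\}$; $\mathcal G_{S_p}$ is generated by $e_1,\dots,e_p$ acting on $X^\ast$ by $e_i(0w)=i\,e_i(w)$, $e_i(iw)=0w$, $e_i(jw)=jw$ for $j\notin\{0,i\}$. $\Gamma^p_n$ is the Schreier graph on $X^n$ with an edge labelled $e_j$ joining $v$ and $e_j(v)$ for all $v,j$. An $e_j$-cycle is the $\langle e_j\rangle$-orbit of a vertex together with its $e_j$-labelled edges; $C_n^i$ is the $e_i$-cycle with vertex set $\{0,i\}^n$. Decomposition: every $u\in X^n\setminus\{0^n\}$ is uniquely written $u=0^ka_1u_1\cdots a_tu_t$ with $k\ge0$, $a_j\in\{1,\dots,p\}$, $a_{j+1}\ne a_j$, $u_j\in\{0,a_j\}^\ast$. Path of cycles: consider the bipartite graph $B_n$ whose vertices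 are the vertices of $\Gamma^p_n$ and the $e$-cycles of length $\ge2$, a vertex being joined to each such cycle containing it; $B_n$ is a tree. Removing $0^n$ from $\Gamma^p_n$ leaves $p$ components; the $i$-th petal is the one containing $C_n^i\setminus\{0^n\}$. For $u\ne0^n$ in the $i$-th petal, the path of cycles $\mathcal P^u_n=(P^n_1(u),\dots,P^n_{m_u}(u))$ is the sequence of cycles met, in order, along the unique path in $B_n$ from $u$ to $C_n^i$ (so $u\in P^n_1(u)$ and $P^n_{m_u}(u)=C_n^i$), and $\mathcal L^u_n$ is the sequence of their lengths. *)

From mathcomp Require Import all_boot.
Set Implicit Arguments. Unset Strict Implicit. Unset Printing Implicit Defensive.

(* Alphabet X = {0,...,p} is 'I_p.+1; vertices of Gamma^p_n are n.-tuple 'I_p.+1. *)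

Fixpoint act (p : nat) (i : 'I_p.+1) (w : seq 'I_p.+1) : seq 'I_p.+1 :=
  match w with
  | [::] => [::]
  | x :: w' => if x == ord0 then i :: act i w'
               else if x == i then ord0 :: w'
               else x :: w'
  end.

Lemma size_act p (i : 'I_p.+1) w : size (act i w) = size w.
Proof.
elim: w => //= x w IH; case: ifP => _ /=; first by rewrite IH.
by case: ifP.
Qed.

Lemma act_tupleP p n (i : 'I_p.+1) (v : n.-tuple 'I_p.+1) : size (act i v) == n.
Proof. by rewrite size_act size_tuple. Qed.

Definition eact p n (i : 'I_p.+1) (v : n.-tuple 'I_p.+1) : n.-tuple 'I_p.+1 :=
  Tuple (act_tupleP i v).

(* <e_j>-orbit of v (e_j is a bijection of the finite set X^n, so the orbit
   under the cyclic group equals the forward orbit) *)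
Definition orbit_e p n (j : 'I_p.+1) (v : n.-tuple 'I_p.+1) : {set n.-tuple 'I_p.+1} :=
  [set w | fconnect (eact j) v w].

(* an e-cycle is recorded as (label j, vertex set) *)
Definition ecycle p n := ('I_p.+1 * {set n.-tuple 'I_p.+1})%type.

(* e-cycles of length >= 2 : the cycle-nodes of B_n *)
Definition is_cycle p n (c : ecycle p n) : bool :=
  [&& (0 < c.1)%N, [exists v, c.2 == orbit_e c.1 v] & (2 <= #|c.2|)%N].

Definition cycle_length p n (c : ecycle p n) : nat := #|c.2|.

Definition zero_word p n : n.-tuple 'I_p.+1 := nseq_tuple n (ord0 : 'I_p.+1).

Definition Ccyc p n (i : 'I_p.+1) : ecycle p n :=
  (i, [set v : n.-tuple 'I_p.+1 | all (fun x => (x == ord0) || (x == i)) v]).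

Definition gedge_no0 p n (v w : n.-tuple 'I_p.+1) : bool :=
  [&& v != zero_word p n, w != zero_word p n &
     [exists j : 'I_p.+1, (0 < j)%N && ((eact j v == w) || (eact j w == v))]].

Definition in_petal p n (i : 'I_p.+1) (u : n.-tuple 'I_p.+1) : Prop :=
  u != zero_word p n /\
  exists2 w, w \in (Ccyc n i).2 & (w != zero_word p n) && connect (@gedge_no0 p n) u w.

(* vs = [v_0;...;v_(m-1)], cs = [c_1;...;c_m]: the path
   u = v_0, c_1, v_1, c_2, ..., v_(m-1), c_m = C  in the bipartite graph B_n
   (vertex v adjacent to cycle c iff v belongs to c), with no repeated node. *)
Definition Bpath p n (u : n.-tuple 'I_p.+1) (vs : seq (n.-tuple 'I_p.+1))
    (cs : seq (ecycle p n)) (C : ecycle p n) : Prop :=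
  [/\ (0 < size cs)%N, size vs = size cs, head u vs = u & all (@is_cycle p n) cs] /\
  [/\ uniq vs, uniq cs,
      (forall j, (j < size cs)%N -> nth u vs j \in (nth C cs j).2),
      (forall j, (j.+1 < size cs)%N -> nth u vs j.+1 \in (nth C cs j).2)
    & last C cs = C].

Definition path_of_cycles p n (u : n.-tuple 'I_p.+1) (cs : seq (ecycle p n)) : Prop :=
  exists i : 'I_p.+1, [/\ (0 < i)%N, in_petal i u & exists vs, Bpath u vs cs (Ccyc n i)].

(* the word a_1 u_1 ... a_t u_t from the lists a = [a_1..a_t], us = [u_1..u_t] *)
Definition join_blocks p (a : seq 'I_p.+1) (us : seq (seq 'I_p.+1)) : seq 'I_p.+1 :=
  flatten [seq x.1 :: x.2 | x <- zip a us].

(* For j <> 0 the e_j-cycle through a word v consists of the words that agree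
   with v after its maximal {0,j}-prefix, of length M say: e_j acts on these
   prefixes as a binary counter, so the cycle has 2^M vertices.  All of them
   have the same number h of blocks (the t of the decomposition) except one,
   the base 0^M rest, which has h - 1; and a vertex with h blocks determines
   the cycle, whose label is then its first nonzero letter.  Hence if a path
   of cycles ever went through the base of a cycle, the heights h of the
   following cycles would strictly increase, which is impossible since the
   path ends at C_n^i, of height 1.  So the path leaves every cycle through
   its base, i.e. it zeroes the blocks of u one at a time from the left, and
   these are exactly the cycles of the statement.  The petal of u is given by
   its last nonzero letter, which is invariant along edges avoiding 0^n. *)

From mathcomp Require Import all_boot zify.
Set Implicit Arguments. Unset Strict Implicit. Unset Printing Implicit Defensive.

Section Words.
Variable p : nat.
Local Notation A := 'I_p.+1.
Local Notation Z := (ord0 : A).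

Definition over01 (j : A) (w : seq A) := all (fun x => (x == Z) || (x == j)) w.

Definition head_not01 (j : A) (w : seq A) :=
  if w is y :: _ then ~~ ((y == Z) || (y == j)) else true.

Lemma act_head_not01 (j : A) w : head_not01 j w -> act j w = w.
Proof. by case: w => //= y w /norP [/negbTE -> /negbTE ->]. Qed.

Lemma act_cat (j : A) x w : act j w = w -> act j (x ++ w) = act j x ++ w.
Proof.
move=> Hw; elim: x => //= y x IH.
by case: ifP => _; [rewrite IH | case: ifP].
Qed.

Lemma over01_act (j : A) x : over01 j x -> over01 j (act j x).
Proof.
elim: x => //= y x IH /andP [Hy Hx].
case: (eqVneq y Z) => [_|yZ] /=; first by rewrite eqxx orbT IH.
case: (eqVneq y j) => [_|yj] /=; first by rewrite Hx.
by rewrite Hy Hx.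
Qed.

(* On {0,j}-words, e_j decrements the binary number whose digits, least
   significant first, are read with j as 1 and 0 as 0. *)
Fixpoint bin01 (j : A) (w : seq A) : nat :=
  if w is y :: w' then (y == j) + (bin01 j w').*2 else 0.

Lemma bin01_act (j : A) x : j != Z -> over01 j x -> 0 < bin01 j x ->
  bin01 j (act j x) = (bin01 j x).-1.
Proof.
move=> jZ; have ZjF : (Z == j) = false by rewrite eq_sym (negbTE jZ).
elim: x => //= y x IH /andP [Hy Hx].
case: (eqVneq y Z) => [->|yZ] /=.
  rewrite ZjF add0n eqxx /= double_gt0 => Hb.
  by rewrite IH // add1n; case: (bin01 j x) Hb.
by move: Hy; rewrite (negbTE yZ) => /eqP ->; rewrite eqxx /= ZjF.
Qed.

Lemma bin01_eq0 (j : A) x : over01 j x -> bin01 j x = 0 -> x = nseq (size x) Z.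
Proof.
elim: x => //= y x IH /andP [Hy Hx] /eqP.
rewrite addn_eq0 double_eq0 eqb0 => /andP [Hyj /eqP Hb].
by move: Hy; rewrite (negbTE Hyj) orbF => /eqP ->; rewrite -IH.
Qed.

Lemma iter_act_bin01 (j : A) x : j != Z -> over01 j x ->
  iter (bin01 j x) (act j) x = nseq (size x) Z.
Proof.
move=> jZ; move Hm: (bin01 j x) => m; elim: m x Hm => [|m IH] x Hm Hx.
  exact: bin01_eq0 Hx Hm.
by rewrite iterSr IH ?size_act ?over01_act ?bin01_act ?Hm.
Qed.

Fixpoint act_inv (j : A) (w : seq A) : seq A :=
  match w with
  | [::] => [::]
  | y :: w' => if y == j then Z :: act_inv j w'
               else if y == Z then j :: w' else y :: w'
  end.

Lemma act_inj (j : A) : j != Z -> injective (act j).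
Proof.
move=> jZ; apply: (can_inj (g := act_inv j)); elim=> //= y w IH.
case: (eqVneq y Z) => [->|yZ] /=; first by rewrite eqxx IH.
case: (eqVneq y j) => [->|yj] /=; first by rewrite eq_sym (negbTE jZ).
by rewrite (negbTE yj) (negbTE yZ).
Qed.

End Words.

Section Cylinders.
Variables p n : nat.
Local Notation A := 'I_p.+1.
Local Notation Z := (ord0 : A).
Local Notation V := (n.-tuple A).

Definition cylinder (j : A) (M : nat) (rest : seq A) : {set V} :=
  [set w : V | over01 j (take M w) && (drop M w == rest)].

Lemma val_iter_eact (j : A) m (v : V) :
  val (iter m (eact j) v) = iter m (act j) (val v).
Proof. by elim: m => //= m ->. Qed.

Lemma iter_act_cat (j : A) m x rest : head_not01 j rest ->
  iter m (act j) (x ++ rest) = iter m (act j) x ++ rest.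
Proof. by move=> Hr; elim: m => //= m ->; rewrite act_cat // act_head_not01. Qed.

Lemma eact_inj (j : A) : j != Z -> injective (@eact p n j).
Proof. by move=> jZ v w /(congr1 val) /(act_inj jZ) /val_inj. Qed.

Lemma cylinder_eact (j : A) M rest (w : V) : M <= n -> head_not01 j rest ->
  w \in cylinder j M rest -> eact j w \in cylinder j M rest.
Proof.
move=> Mn Hr; rewrite !inE => /andP [Hw /eqP E].
have -> : val (eact j w) = act j (take M w) ++ rest.
  by rewrite /= -E -act_cat ?cat_take_drop // E act_head_not01.
have sz : size (act j (take M w)) = M by rewrite size_act size_takel ?size_tuple.
by rewrite take_size_cat // drop_size_cat // eqxx over01_act.
Qed.

Lemma iter_eact_bin01 (j : A) M (v : V) : j != Z -> M <= n ->
  over01 j (take M v) -> head_not01 j (drop M v) ->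
  val (iter (bin01 j (take M v)) (eact j) v) = nseq M Z ++ drop M v.
Proof.
move=> jZ Mn Hv Hr; rewrite val_iter_eact -{1}(cat_take_drop M (val v)).
by rewrite iter_act_cat // iter_act_bin01 // size_takel ?size_tuple.
Qed.

Lemma orbit_e_cylinder (j : A) M (v : V) : j != Z -> M <= n ->
  over01 j (take M v) -> head_not01 j (drop M v) ->
  orbit_e j v = cylinder j M (drop M v).
Proof.
move=> jZ Mn Hv Hr; apply/setP => w; rewrite !inE; apply/idP/idP.
  move=> /iter_findex <-; elim: (findex _ v w) => [|m IH] /=.
    by rewrite Hv eqxx.
  have Hm : iter m (eact j) v \in cylinder j M (drop M v) by rewrite inE.
  by have := cylinder_eact Mn Hr Hm; rewrite inE.
move=> /andP [Hw /eqP E].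
have base_eq : iter (bin01 j (take M v)) (eact j) v
             = iter (bin01 j (take M w)) (eact j) w.
  by apply: val_inj; rewrite !iter_eact_bin01 // ?E // -E.
apply: connect_trans (fconnect_iter (eact j) (bin01 j (take M v)) v) _.
by rewrite base_eq fconnect_sym ?fconnect_iter //; apply: eact_inj.
Qed.

Lemma card_cylinder (j : A) M rest : j != Z -> M + size rest = n ->
  #|cylinder j M rest| = 2 ^ M.
Proof.
move=> jZ sz; pose g (x : bool) : A := if x then j else Z.
have ginj : injective g.
  by case; case => //= /eqP; rewrite ?(negbTE jZ) // eq_sym (negbTE jZ).
pose f (b : M.-tuple bool) : V := insubd (nseq_tuple n Z) (map g b ++ rest).
have fE b : val (f b) = map g b ++ rest.
  by rewrite val_insubd size_cat size_map size_tuple sz eqxx.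
have finj : injective f.
  move=> b1 b2 /(congr1 val); rewrite !fE => /eqP.
  rewrite eqseq_cat ?size_map ?size_tuple // => /andP [/eqP /(inj_map ginj) E _].
  exact: val_inj.
have Mn : M <= n by rewrite -sz leq_addr.
suff -> : cylinder j M rest = [set f b | b in predT].
  by rewrite card_imset // card_tuple card_bool.
apply/setP => w; rewrite inE; apply/idP/imsetP.
- move=> /andP [Hw /eqP E].
  have szb : size [seq x == j | x <- take M w] == M.
    by rewrite size_map size_takel // size_tuple.
  exists (Tuple szb) => //; apply: val_inj; rewrite fE /= -map_comp -E.
  rewrite -[in LHS](cat_take_drop M w); congr (_ ++ _).
  rewrite -[LHS]map_id; apply/eq_in_map => x /(allP Hw) /= /orP [] /eqP ->.
    by rewrite /g eq_sym (negbTE jZ).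
  by rewrite /g eqxx.
- case=> b _ ->; rewrite fE take_size_cat ?drop_size_cat ?size_map ?size_tuple //.
  rewrite eqxx andbT /over01 all_map; apply/allP => x _ /=.
  by case: x; rewrite /g eqxx ?orbT.
Qed.

End Cylinders.

Section Blocks.
Variable p : nat.
Local Notation A := 'I_p.+1.
Local Notation Z := (ord0 : A).

(* block_count w is the t of the decomposition w = 0^k a_1 u_1 ... a_t u_t;
   blocks_after q w counts the blocks of w when q was the last nonzero
   letter read before w. *)
Fixpoint blocks_after (q : A) (w : seq A) : nat :=
  match w with
  | [::] => 0
  | x :: w' => if x == Z then blocks_after q w' else (x != q) + blocks_after x w'
  end.

Definition block_count (w : seq A) := blocks_after Z w.

Lemma blocks_after_cat01 (j : A) x rest q : j != Z -> over01 j x ->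
  (q == Z) || (q == j) ->
  blocks_after q (x ++ rest) =
    (has (pred1 j) x && (q == Z)) + blocks_after (if has (pred1 j) x then j else q) rest.
Proof.
move=> jZ; have ZjF : (Z == j) = false by rewrite eq_sym (negbTE jZ).
elim: x q => //= y x IH q /andP [Hy Hx] Hq.
case: (eqVneq y Z) => [->|yZ]; first by rewrite /= ZjF IH.
move: Hy; rewrite (negbTE yZ) /= => /eqP ->; rewrite eqxx /= IH ?eqxx ?orbT //.
rewrite (negbTE jZ) andbF add0n if_same.
by case/orP: Hq => /eqP ->; rewrite ?eqxx ?jZ ?(negbTE jZ).
Qed.

Lemma blocks_after_head_not01 (j : A) rest : head_not01 j rest ->
  blocks_after j rest = block_count rest.
Proof. by case: rest => //= y r /norP [/negbTE yZ yj]; rewrite /block_count /= yZ yj. Qed.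

Lemma block_count_cat01 (j : A) x rest : j != Z -> over01 j x ->
  head_not01 j rest -> block_count (x ++ rest) = has (pred1 j) x + block_count rest.
Proof.
move=> jZ Hx Hr; rewrite /block_count (blocks_after_cat01 _ jZ Hx) ?eqxx // andbT.
by case: (has _ x); rewrite ?(blocks_after_head_not01 Hr).
Qed.

Lemma block_count_nseq0 m w : block_count (nseq m Z ++ w) = block_count w.
Proof. by elim: m. Qed.

Definition prefix01 (j : A) (v : seq A) :=
  find (fun y => ~~ ((y == Z) || (y == j))) v.

Lemma over01_prefix01 (j : A) v : over01 j (take (prefix01 j v) v).
Proof. by elim: v => //= y v IH; rewrite /prefix01 /=; case: ifP => //= /negbFE ->. Qed.

Lemma head_not01_prefix01 (j : A) v : head_not01 j (drop (prefix01 j v) v).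
Proof. by elim: v => //= y v IH; rewrite /prefix01 /=; case: ifP => //= /negbFE ->. Qed.

Lemma over01_hasNj (j : A) x : over01 j x -> ~~ has (pred1 j) x -> x = nseq (size x) Z.
Proof.
elim: x => //= y x IH /andP [Hy Hx] /norP [yj /(IH Hx) <-].
by move: Hy; rewrite (negbTE yj) orbF => /eqP ->.
Qed.

Definition first_letter (w : seq A) := head Z [seq y <- w | y != Z].

Lemma first_letter_cat01 (j : A) x rest : j != Z -> over01 j x -> has (pred1 j) x ->
  first_letter (x ++ rest) = j.
Proof.
move=> jZ; rewrite /first_letter; elim: x => //= y x IH /andP [Hy Hx] /orP [/eqP ->|H].
  by rewrite jZ.
case: (eqVneq y Z) => [_|yZ] /=; first exact: IH.
by move: Hy; rewrite (negbTE yZ) /= => /eqP.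
Qed.

Definition last_letter (w : seq A) := last Z [seq y <- w | y != Z].

Lemma last_letter_over01 (j : A) x d : over01 j x -> (d = j \/ has (predC1 Z) x) ->
  last d [seq y <- x | y != Z] = j.
Proof.
elim: x d => [|y x IH] d /=; first by move=> _ [].
case/andP => Hy Hx H; case: (eqVneq y Z) => [E|yZ] /=.
  by apply: IH => //; case: H => [->|]; [left | rewrite E /= => ->; right].
by move: Hy; rewrite (negbTE yZ) /= => /eqP ->; apply: IH => //; left.
Qed.

Lemma last_filter_nonzero (x y : A) s : has (predC1 Z) s ->
  last x [seq z <- s | z != Z] = last y [seq z <- s | z != Z].
Proof. by elim: s => //= z s IH /orP [->|H] //; case: ifP => _ //=; apply: IH. Qed.

Lemma last_letter_act_zero (j : A) w : j != Z ->
  has (predC1 Z) w -> ~~ has (predC1 Z) (act j w) -> last_letter w = j.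
Proof.
move=> jZ; case: w => //= y w; case: (eqVneq y Z) => [->|yZ] /=; first by rewrite jZ.
case: (eqVneq y j) => [->|yj] /=; last by rewrite yZ.
move=> _ H; rewrite /last_letter /= jZ /=.
by elim: w H => //= x w IH /norP [/negbNE -> /IH].
Qed.

Lemma last_letter_act (j : A) w : j != Z -> has (predC1 Z) w ->
  has (predC1 Z) (act j w) -> last_letter (act j w) = last_letter w.
Proof.
move=> jZ; elim: w => //= y w IH.
case: (eqVneq y Z) => [->|yZ] /=.
  move=> Hw; rewrite /last_letter /= jZ /=.
  case Ha: (has (predC1 Z) (act j w)) => _.
    by rewrite (last_filter_nonzero _ Z Ha); apply: IH.
  have -> : [seq y0 <- act j w | y0 != Z] = [::].
    by apply/eqP; rewrite -size_eq0 size_filter -leqn0 leqNgt -has_count Ha.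
  by symmetry; apply: last_letter_act_zero (negbT Ha).
case: (eqVneq y j) => [->|yj] //= _ Hw.
by rewrite /last_letter /= jZ /=; apply: last_filter_nonzero; rewrite /= ?eqxx in Hw.
Qed.

End Blocks.

Section Cycles.
Variables p n : nat.
Local Notation A := 'I_p.+1.
Local Notation Z := (ord0 : A).
Local Notation V := (n.-tuple A).

Definition height (c : ecycle p n) := \max_(w in c.2) block_count w.

Lemma prefix01_le (j : A) (v : V) : prefix01 j v <= n.
Proof. by apply: leq_trans (find_size _ _) _; rewrite size_tuple. Qed.

Lemma cycle_cylinder (c : ecycle p n) (v : V) : is_cycle c -> v \in c.2 ->
  [/\ c.1 != Z, c.2 = orbit_e c.1 v
    & c.2 = cylinder n c.1 (prefix01 c.1 v) (drop (prefix01 c.1 v) v)].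
Proof.
case/and3P => c0 /existsP [v0 /eqP E] _ Hv.
have jZ : c.1 != Z by rewrite -lt0n.
have E2 : c.2 = orbit_e c.1 v.
  rewrite E; apply/setP => w; rewrite !inE; apply: same_connect.
    by move=> x y; apply: fconnect_sym; apply: eact_inj.
  by move: Hv; rewrite E inE.
by rewrite E2 (orbit_e_cylinder jZ (prefix01_le _ _) (over01_prefix01 _ _)
  (head_not01_prefix01 _ _)).
Qed.

Lemma block_count_cylinder (j : A) M rest (w : V) : j != Z -> head_not01 j rest ->
  w \in cylinder n j M rest -> block_count w = has (pred1 j) (take M w) + block_count rest.
Proof.
move=> jZ Hr; rewrite inE => /andP [H /eqP E].
by rewrite -(block_count_cat01 jZ H) -?E ?cat_take_drop // E.
Qed.

Lemma cylinder_hasNj (j : A) M rest (w : V) : M <= n ->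
  w \in cylinder n j M rest -> ~~ has (pred1 j) (take M w) -> val w = nseq M Z ++ rest.
Proof.
move=> Mn; rewrite inE => /andP [H /eqP E] /(over01_hasNj H) T.
by rewrite -(cat_take_drop M (val w)) T E size_takel ?size_tuple.
Qed.

Lemma height_cylinder (c : ecycle p n) M rest : is_cycle c -> c.1 != Z -> M <= n ->
  head_not01 c.1 rest -> c.2 = cylinder n c.1 M rest -> height c = (block_count rest).+1.
Proof.
move=> Hc jZ Mn Hr ES; apply/eqP; rewrite eqn_leq; apply/andP; split.
  apply/bigmax_leqP => w; rewrite ES => /(block_count_cylinder jZ Hr) ->.
  by case: has.
case/and3P: Hc => _ _ /card_gt1P [w1 [w2 [H1 H2 ne]]].
have top w : w \in c.2 -> has (pred1 c.1) (take M w) -> (block_count rest).+1 <= height c.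
  move=> Hw hw; apply: leq_trans (leq_bigmax_cond _ Hw).
  by rewrite ES in Hw; rewrite (block_count_cylinder jZ Hr Hw) hw.
case h1: (has (pred1 c.1) (take M w1)); first exact: top h1.
case h2: (has (pred1 c.1) (take M w2)); first exact: top h2.
rewrite ES in H1 H2; move: ne.
have := cylinder_hasNj Mn H1 (negbT h1); have := cylinder_hasNj Mn H2 (negbT h2).
by move=> <- /val_inj ->; rewrite eqxx.
Qed.

Lemma height_cycle (c : ecycle p n) (v : V) : is_cycle c -> v \in c.2 ->
  height c = (block_count (drop (prefix01 c.1 v) v)).+1.
Proof.
move=> Hc Hv; have [jZ _ ES] := cycle_cylinder Hc Hv.
exact: height_cylinder Hc jZ (prefix01_le _ _) (head_not01_prefix01 _ _) ES.
Qed.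

Lemma cycle_base_unique (c : ecycle p n) (w1 w2 : V) : is_cycle c ->
  w1 \in c.2 -> w2 \in c.2 -> block_count w1 < height c -> block_count w2 < height c ->
  w1 = w2.
Proof.
move=> Hc H1 H2; have [jZ _ ES] := cycle_cylinder Hc H1.
rewrite (height_cycle Hc H1); rewrite ES in H1 H2.
have Mn := prefix01_le c.1 w1; have Hr := head_not01_prefix01 c.1 w1.
rewrite (block_count_cylinder jZ Hr H1) (block_count_cylinder jZ Hr H2) !ltnS.
case h1: has; rewrite ?add1n ?ltnn //; case h2: has; rewrite ?add1n ?ltnn // => _ _.
by apply: val_inj; rewrite (cylinder_hasNj Mn H1 (negbT h1)) (cylinder_hasNj Mn H2 (negbT h2)).
Qed.

Lemma first_letter_cycle_top (c : ecycle p n) (v : V) : is_cycle c -> v \in c.2 ->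
  height c <= block_count v -> first_letter v = c.1.
Proof.
move=> Hc Hv; have [jZ _ ES] := cycle_cylinder Hc Hv.
rewrite (height_cycle Hc Hv); have Hv' := Hv; rewrite ES in Hv'.
rewrite (block_count_cylinder jZ (head_not01_prefix01 _ _) Hv').
case h: has; rewrite ?add0n ?ltnn // => _.
by rewrite -(cat_take_drop (prefix01 c.1 v) v) (first_letter_cat01 _ jZ) ?over01_prefix01.
Qed.

Lemma cycle_top_unique (c1 c2 : ecycle p n) (v : V) : is_cycle c1 -> is_cycle c2 ->
  v \in c1.2 -> v \in c2.2 -> height c1 <= block_count v -> height c2 <= block_count v ->
  c1 = c2.
Proof.
move=> Hc1 Hc2 H1 H2 L1 L2.
have E1 := first_letter_cycle_top Hc1 H1 L1; have E2 := first_letter_cycle_top Hc2 H2 L2.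
have [_ O1 _] := cycle_cylinder Hc1 H1; have [_ O2 _] := cycle_cylinder Hc2 H2.
by move: E1 E2 O1 O2; case: c1 {Hc1 H1 L1} => j1 S1; case: c2 {Hc2 H2 L2} => j2 S2 /= -> <- -> ->.
Qed.

End Cycles.

Section Bpaths.
Variables p n : nat.
Variables (u : n.-tuple 'I_p.+1) (vs : seq (n.-tuple 'I_p.+1)).
Variables (cs : seq (ecycle p n)) (C : ecycle p n).
Hypothesis HB : Bpath u vs cs C.

Local Notation v_ i := (nth u vs i).
Local Notation c_ i := (nth C cs i).

Lemma Bpath_cycle i : i < size cs -> is_cycle (c_ i).
Proof. by case: HB => [[_ _ _ /allP H] _] Hi; apply/H/mem_nth. Qed.

Lemma Bpath_vertex_in i : i < size cs -> v_ i \in (c_ i).2.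
Proof. by case: HB => _ [_ _ H _ _]; apply: H. Qed.

Lemma Bpath_next_vertex_in i : i.+1 < size cs -> v_ i.+1 \in (c_ i).2.
Proof. by case: HB => _ [_ _ _ H _]; apply: H. Qed.

Lemma Bpath_leave_base i : i.+1 < size cs ->
  block_count (v_ i) < height (c_ i) -> height (c_ i) <= block_count (v_ i.+1).
Proof.
move=> Hi L; rewrite leqNgt; apply/negP => L'; have Hi' := ltnW Hi.
have E := cycle_base_unique (Bpath_cycle Hi') (Bpath_vertex_in Hi')
  (Bpath_next_vertex_in Hi) L L'.
case: HB => [[_ Hs _ _] [Hu _ _ _ _]].
by move/eqP: E; rewrite nth_uniq ?Hs // => /eqP /n_Sn.
Qed.

Lemma Bpath_enter_base i : i.+1 < size cs ->
  height (c_ i) <= block_count (v_ i.+1) -> block_count (v_ i.+1) < height (c_ i.+1).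
Proof.
move=> Hi L; rewrite ltnNge; apply/negP => L'; have Hi' := ltnW Hi.
have E := cycle_top_unique (Bpath_cycle Hi') (Bpath_cycle Hi)
  (Bpath_next_vertex_in Hi) (Bpath_vertex_in Hi) L L'.
case: HB => [_ [_ Hc _ _ _]].
by move/eqP: E; rewrite nth_uniq // => /eqP /n_Sn.
Qed.

Lemma Bpath_bases_ascend i d : i + d < size cs -> block_count (v_ i) < height (c_ i) ->
  block_count (v_ (i + d)) < height (c_ (i + d)) /\ height (c_ i) + d <= height (c_ (i + d)).
Proof.
move=> + L; elim: d => [|d IH] Hd; first by rewrite !addn0.
have Hs : (i + d).+1 < size cs by rewrite -addnS.
have [L1 L2] := IH (ltnW Hs).
have L3 := Bpath_leave_base Hs L1; have L4 := Bpath_enter_base Hs L3.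
rewrite !addnS; split => //.
by apply: leq_trans L4; rewrite ltnS (leq_trans L2 L3).
Qed.

Lemma Bpath_base_height_last i : i < size cs ->
  block_count (v_ i) < height (c_ i) -> height (c_ i) <= height (last C cs).
Proof.
move=> Hi L; have Hd : i + (size cs - i.+1) < size cs by lia.
have [_] := Bpath_bases_ascend Hd L.
have -> : i + (size cs - i.+1) = (size cs).-1 by lia.
by rewrite nth_last; apply: leq_trans; apply: leq_addr.
Qed.

End Bpaths.

Section Petals.
Variables p n : nat.
Local Notation A := 'I_p.+1.
Local Notation Z := (ord0 : A).
Local Notation V := (n.-tuple A).

Lemma has_nonzero (w : V) : w != zero_word p n -> has (predC1 Z) w.
Proof.
have nseq_size (s : seq A) : ~~ has (predC1 Z) s -> s = nseq (size s) Z.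
  by elim: s => //= x s IH /norP [/negbNE /eqP -> /IH <-].
by apply: contraR => /nseq_size E; apply/eqP/val_inj; rewrite /= E size_tuple.
Qed.

Lemma last_letter_edge (v w : V) : gedge_no0 v w -> last_letter v = last_letter w.
Proof.
case/and3P => /has_nonzero hv /has_nonzero hw /existsP [j /andP [j0 H]].
have jZ : j != Z by rewrite -lt0n.
by case/orP: H => /eqP E; [move: hw | move: hv]; rewrite -E => H;
  rewrite /= last_letter_act.
Qed.

Lemma last_letter_connect (v w : V) :
  connect (@gedge_no0 p n) v w -> last_letter v = last_letter w.
Proof.
case/connectP => s Hp ->; elim: s v Hp => //= x s IH v /andP [e Hp].
by rewrite (last_letter_edge e); apply: IH.
Qed.

End Petals.

Section PathOfCycles.
Variables p n : nat.
Local Notation A := 'I_p.+1.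
Local Notation Z := (ord0 : A).
Local Notation V := (n.-tuple A).
Variables (u : V) (k : nat) (a : seq A) (us : seq (seq A)).
Hypothesis hu : u != zero_word p n.
Hypothesis hsize : size a = size us.
Hypothesis ha : all (fun x : A => 0 < x) a.
Hypothesis hadj : forall j, j.+1 < size a -> nth Z a j != nth Z a j.+1.
Hypothesis hus : forall j, j < size a -> over01 (nth Z a j) (nth [::] us j).
Hypothesis hdec : val u = nseq k Z ++ join_blocks a us.

Local Notation t := (size a).

Definition prefix_len j := k + j + \sum_(l < j) size (nth [::] us l).
Definition tail_blocks j := join_blocks (drop j a) (drop j us).

(* base_seq j is u with its first j blocks zeroed out; the paper's
   P_{j+1}(u) is path_cycle j, whose base is base_seq j.+1. *)
Definition base_seq j := nseq (prefix_len j) Z ++ tail_blocks j.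
Definition base_word j : V := insubd u (base_seq j).
Definition path_cycle j : ecycle p n :=
  (nth Z a j, cylinder n (nth Z a j) (prefix_len j.+1) (tail_blocks j.+1)).

Lemma prefix_lenS j : prefix_len j.+1 = (prefix_len j + size (nth [::] us j)).+1.
Proof. by rewrite /prefix_len big_ord_recr /=; lia. Qed.

Lemma nth_a_neq0 j : j < t -> nth Z a j != Z.
Proof. by move=> Hj; rewrite -lt0n; apply: (allP ha); rewrite mem_nth. Qed.

Lemma tail_blocksE j : j < t -> tail_blocks j = nth Z a j :: nth [::] us j ++ tail_blocks j.+1.
Proof. by move=> Hj; rewrite /tail_blocks (drop_nth Z Hj) (drop_nth [::]) -?hsize. Qed.

Lemma tail_blocks_size : tail_blocks t = [::].
Proof. by rewrite /tail_blocks !drop_oversize // -hsize. Qed.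

Lemma base_seqS j : j < t ->
  base_seq j = nseq (prefix_len j) Z ++ (nth Z a j :: nth [::] us j) ++ tail_blocks j.+1.
Proof. by move=> Hj; rewrite /base_seq tail_blocksE. Qed.

Lemma base_seq0 : base_seq 0 = val u.
Proof. by rewrite hdec /base_seq /prefix_len big_ord0 /tail_blocks !drop0 !addn0. Qed.

Lemma size_base_seq j : j <= t -> size (base_seq j) = n.
Proof.
elim: j => [|j IH] Hj; first by rewrite base_seq0 size_tuple.
rewrite -(IH (ltnW Hj)) (base_seqS Hj) /base_seq prefix_lenS.
by rewrite !size_cat !size_nseq /=; lia.
Qed.

Lemma prefix_len_size : prefix_len t = n.
Proof.
by have := size_base_seq (leqnn t); rewrite /base_seq tail_blocks_size cats0 size_nseq.
Qed.

Lemma size_a_gt0 : 0 < t.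
Proof.
case Ht: t => //; move: hdec; rewrite (size0nil Ht).
have -> : join_blocks [::] us = [::] by case: us.
rewrite cats0 => E; have nk : n = k by rewrite -(size_tuple u) E size_nseq.
by move: hu; rewrite -(inj_eq val_inj) /= E nk eqxx.
Qed.

Lemma size_tail_blocks j : j < t -> prefix_len j.+1 + size (tail_blocks j.+1) = n.
Proof. by move=> Hj; rewrite -(size_base_seq Hj) /base_seq size_cat size_nseq. Qed.

Lemma prefix_len_le j : j < t -> prefix_len j.+1 <= n.
Proof. by move=> Hj; rewrite -(size_tail_blocks Hj) leq_addr. Qed.

Lemma over01_block j : j < t ->
  over01 (nth Z a j) (nseq (prefix_len j) Z ++ nth Z a j :: nth [::] us j).
Proof.
move=> Hj; rewrite /over01 all_cat /= eqxx orbT; apply/andP; split; last exact: hus.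
by apply/allP => x /nseqP [-> _].
Qed.

Lemma head_not01_tail_blocks j : j < t -> head_not01 (nth Z a j) (tail_blocks j.+1).
Proof.
move=> Hj; case: (ltnP j.+1 t) => H.
  by rewrite (tail_blocksE H) /= negb_or (nth_a_neq0 H) eq_sym hadj.
have -> : j.+1 = t by apply/eqP; rewrite eqn_leq H Hj.
by rewrite tail_blocks_size.
Qed.

Lemma block_count_tail_blocks j : j <= t -> block_count (tail_blocks j) = t - j.
Proof.
move Hd: (t - j) => d; elim: d j Hd => [|d IH] j Hd Hj.
  have -> : j = t by lia.
  by rewrite tail_blocks_size.
have Hjt : j < t by lia.
rewrite (tail_blocksE Hjt) -cat_cons (block_count_cat01 (nth_a_neq0 Hjt)).
- by rewrite /= eqxx (IH j.+1) //; lia.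
- by rewrite /over01 /= eqxx orbT; exact: hus.
- exact: head_not01_tail_blocks.
Qed.

Lemma base_wordE j : j <= t -> val (base_word j) = base_seq j.
Proof. by move=> Hj; rewrite val_insubd size_base_seq // eqxx. Qed.

Lemma base_word0 : base_word 0 = u.
Proof. by apply: val_inj; rewrite base_wordE // base_seq0. Qed.

Lemma block_count_base_word j : j <= t -> block_count (base_word j) = t - j.
Proof.
by move=> Hj; rewrite base_wordE // block_count_nseq0 block_count_tail_blocks.
Qed.

Lemma take_base_word j : j < t ->
  take (prefix_len j.+1) (base_word j) = nseq (prefix_len j) Z ++ nth Z a j :: nth [::] us j.
Proof.
move=> Hj; rewrite (base_wordE (ltnW Hj)) base_seqS // catA take_size_cat //.
by rewrite size_cat size_nseq prefix_lenS /= addnS.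
Qed.

Lemma drop_base_word j : j < t -> drop (prefix_len j.+1) (base_word j) = tail_blocks j.+1.
Proof.
move=> Hj; rewrite (base_wordE (ltnW Hj)) base_seqS // catA drop_size_cat //.
by rewrite size_cat size_nseq prefix_lenS /= addnS.
Qed.

Lemma base_word_in_cycle j : j < t -> base_word j \in (path_cycle j).2.
Proof.
by move=> Hj; rewrite inE take_base_word // drop_base_word // eqxx andbT over01_block.
Qed.

Lemma base_word_next_in_cycle j : j < t -> base_word j.+1 \in (path_cycle j).2.
Proof.
move=> Hj; rewrite inE base_wordE // /base_seq take_size_cat ?size_nseq //.
by rewrite drop_size_cat ?size_nseq // eqxx andbT; apply/allP => x /nseqP [-> _].
Qed.

Lemma path_cycle_orbit j : j < t -> (path_cycle j).2 = orbit_e (nth Z a j) (base_word j).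
Proof.
move=> Hj; rewrite (orbit_e_cylinder (nth_a_neq0 Hj) (prefix_len_le Hj)).
- by rewrite drop_base_word.
- by rewrite take_base_word // over01_block.
- by rewrite drop_base_word // head_not01_tail_blocks.
Qed.

Lemma card_path_cycle j : j < t -> #|(path_cycle j).2| = 2 ^ prefix_len j.+1.
Proof. by move=> Hj; rewrite card_cylinder ?nth_a_neq0 ?size_tail_blocks. Qed.

Lemma path_cycle_is_cycle j : j < t -> is_cycle (path_cycle j).
Proof.
move=> Hj; apply/and3P; split.
- by rewrite lt0n nth_a_neq0.
- by apply/existsP; exists (base_word j); rewrite path_cycle_orbit.
- by rewrite card_path_cycle // prefix_lenS expnS leq_pmulr // expn_gt0.
Qed.

Lemma height_path_cycle j : j < t -> height (path_cycle j) = t - j.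
Proof.
move=> Hj; rewrite (height_cylinder (M := prefix_len j.+1) (rest := tail_blocks j.+1)
  (path_cycle_is_cycle Hj)) ?nth_a_neq0 ?prefix_len_le ?head_not01_tail_blocks //.
by rewrite block_count_tail_blocks //; lia.
Qed.

Lemma path_cycle_nonzero j (y : V) : j.+1 < t -> y \in (path_cycle j).2 ->
  y != zero_word p n.
Proof.
move=> H; rewrite inE => /andP [_ /eqP E]; apply/eqP => Ey; move: E.
rewrite Ey /= drop_nseq (tail_blocksE H); case: (n - _) => //= m [] E _.
by move: (nth_a_neq0 H); rewrite -E eqxx.
Qed.

Lemma connect_base_word_step j : j.+1 < t ->
  connect (@gedge_no0 p n) (base_word j) (base_word j.+1).
Proof.
move=> H; have Hj := ltnW H; have Hin := base_word_next_in_cycle Hj.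
rewrite path_cycle_orbit // inE in Hin.
rewrite -(iter_findex Hin); elim: (findex _ _ _) => [|m IH]; first exact: connect0.
apply: connect_trans IH (connect1 _).
have Hm i : iter i (eact (nth Z a j)) (base_word j) \in (path_cycle j).2.
  by rewrite path_cycle_orbit // inE fconnect_iter.
rewrite /= /gedge_no0 (path_cycle_nonzero H (Hm m)) (path_cycle_nonzero H (Hm m.+1)) /=.
by apply/existsP; exists (nth Z a j); rewrite lt0n nth_a_neq0 // eqxx.
Qed.

Lemma connect_base_word j : j < t -> connect (@gedge_no0 p n) u (base_word j).
Proof.
elim: j => [|j IH] H; first by rewrite base_word0 connect0.
exact: connect_trans (IH (ltnW H)) (connect_base_word_step H).
Qed.

Lemma last_lt_size_a : t.-1 < t.
Proof. by rewrite prednK ?size_a_gt0. Qed.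

Lemma last_letter_u : last_letter u = nth Z a t.-1.
Proof.
have Ht := last_lt_size_a.
rewrite (last_letter_connect (connect_base_word Ht)) /last_letter (base_wordE (ltnW Ht)).
rewrite base_seqS // prednK ?size_a_gt0 // tail_blocks_size cats0.
apply: last_letter_over01; first exact: over01_block Ht.
by right; rewrite has_cat /= nth_a_neq0 ?orbT.
Qed.

Lemma path_cycle_last : path_cycle t.-1 = Ccyc n (nth Z a t.-1).
Proof.
rewrite /path_cycle /Ccyc prednK ?size_a_gt0 // tail_blocks_size prefix_len_size.
congr (_, _); apply/setP => v.
by rewrite !inE take_oversize ?drop_oversize ?size_tuple // eqxx andbT.
Qed.

Lemma height_path_cycle_last : height (path_cycle t.-1) = 1.
Proof. by rewrite height_path_cycle ?last_lt_size_a //; have := size_a_gt0; lia. Qed.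


Section Uniqueness.
Variables (vs : seq V) (cs : seq (ecycle p n)).
Hypothesis HB : Bpath u vs cs (path_cycle t.-1).

Local Notation v_ i := (nth u vs i).
Local Notation c_ i := (nth (path_cycle t.-1) cs i).

Lemma height_last_Bpath : height (last (path_cycle t.-1) cs) = 1.
Proof. by case: HB => _ [_ _ _ _ ->]; rewrite height_path_cycle_last. Qed.

(* The path can never pass through the base of a cycle: the heights would
   then increase up to the height 1 of the last cycle. *)
Lemma Bpath_not_base i : i < size cs -> 0 < block_count (v_ i) ->
  height (c_ i) <= block_count (v_ i).
Proof.
move=> Hi Hv; rewrite leqNgt; apply/negP => L.
by have := Bpath_base_height_last HB Hi L; rewrite height_last_Bpath; lia.
Qed.

Lemma Bpath_cycle_at i : i < size cs -> i < t -> v_ i = base_word i -> c_ i = path_cycle i.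
Proof.
move=> Hi Hit Ev; have Hb : block_count (v_ i) = t - i by rewrite Ev (block_count_base_word (ltnW Hit)).
apply: (cycle_top_unique (Bpath_cycle HB Hi) (path_cycle_is_cycle Hit)
  (Bpath_vertex_in HB Hi)); rewrite ?Ev ?base_word_in_cycle //.
- by rewrite -Ev Bpath_not_base // Hb; lia.
- by rewrite -Ev Hb height_path_cycle.
Qed.

Lemma Bpath_vertex_next i : i.+1 < size cs -> i < t -> c_ i = path_cycle i ->
  v_ i.+1 = base_word i.+1.
Proof.
move=> Hi Hit Ec; have Hin := Bpath_next_vertex_in HB Hi; rewrite Ec in Hin.
apply: (cycle_base_unique (path_cycle_is_cycle Hit) Hin (base_word_next_in_cycle Hit)).
  rewrite ltnNge; apply/negP => L; rewrite -Ec in L.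
  have L' := Bpath_enter_base HB Hi L.
  have := Bpath_base_height_last HB Hi L'; rewrite height_last_Bpath.
  by move: L L'; rewrite Ec height_path_cycle //; lia.
by rewrite block_count_base_word // height_path_cycle //; lia.
Qed.

Lemma Bpath_canonical i : i < size cs -> i < t ->
  v_ i = base_word i /\ c_ i = path_cycle i.
Proof.
have Bpath_at j : j < size cs -> j < t -> v_ j = base_word j ->
    v_ j = base_word j /\ c_ j = path_cycle j.
  by move=> Hj Hjt Ev; split; last exact: Bpath_cycle_at.
elim: i => [|i IH] Hi Hit.
  by apply: Bpath_at => //; rewrite nth0 base_word0; case: HB => [[_ _ -> _] _].
have [_ Ec] := IH (ltnW Hi) (ltnW Hit).
exact/Bpath_at/Bpath_vertex_next/Ec/ltnW.
Qed.

Lemma size_Bpath : size cs = t.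
Proof.
have [[cs_gt0 _ _ _] [_ Uc _ _ Hl]] := HB.
have Hlast : (size cs).-1 < size cs by rewrite prednK.
case: (ltngtP (size cs) t) => // H.
  have [_ E] := Bpath_canonical Hlast (leq_ltn_trans (leq_pred _) H).
  move: height_last_Bpath; rewrite -nth_last E height_path_cycle.
    by lia.
  exact: leq_ltn_trans (leq_pred _) H.
have [_ E] := Bpath_canonical (ltn_trans last_lt_size_a H) last_lt_size_a.
have : c_ t.-1 == c_ (size cs).-1 by rewrite nth_last Hl E.
by rewrite nth_uniq // ?(ltn_trans last_lt_size_a H) //; have := size_a_gt0; lia.
Qed.

Lemma Bpath_unique : cs = mkseq path_cycle t.
Proof.
apply: (@eq_from_nth _ (path_cycle t.-1)); first by rewrite size_mkseq size_Bpath.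
move=> i Hi; have Hit : i < t by rewrite -size_Bpath.
by rewrite nth_mkseq //; have [_ ->] := Bpath_canonical Hi Hit.
Qed.

End Uniqueness.

Lemma Bpath_path_cycles : Bpath u (mkseq base_word t) (mkseq path_cycle t) (path_cycle t.-1).
Proof.
have t_gt0 := size_a_gt0.
split; split.
- by rewrite size_mkseq.
- by rewrite !size_mkseq.
- by rewrite -nth0 nth_mkseq // base_word0.
- by apply/allP => c /mapP [j]; rewrite mem_iota => /andP [_ Hj] ->; exact: path_cycle_is_cycle.
- rewrite map_inj_in_uniq ?iota_uniq // => i j; rewrite !mem_iota !add0n => /andP [_ Hi] /andP [_ Hj].
  move/(congr1 (fun w : V => block_count w)).
  by rewrite (block_count_base_word (ltnW Hi)) (block_count_base_word (ltnW Hj)); lia.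
- rewrite map_inj_in_uniq ?iota_uniq // => i j; rewrite !mem_iota !add0n => /andP [_ Hi] /andP [_ Hj].
  by move/(congr1 (@height p n)); rewrite !height_path_cycle //; lia.
- by move=> j; rewrite size_mkseq => Hj; rewrite !nth_mkseq // base_word_in_cycle.
- move=> j; rewrite size_mkseq => Hj.
  by rewrite !nth_mkseq ?base_word_next_in_cycle // ltnW.
- by rewrite -nth_last size_mkseq nth_mkseq ?last_lt_size_a.
Qed.

Lemma in_petal_u : in_petal (nth Z a t.-1) u.
Proof.
have Ht := last_lt_size_a; split => //; exists (base_word t.-1).
  by rewrite -path_cycle_last base_word_in_cycle.
rewrite connect_base_word // andbT; apply/eqP => E.
have := block_count_base_word (ltnW Ht); rewrite E /block_count.
have -> : blocks_after Z (nseq n Z) = 0 by elim: n.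
by have := size_a_gt0; lia.
Qed.

Lemma in_petal_label (i : A) : in_petal i u -> i = nth Z a t.-1.
Proof.
case=> _ [w Hw /andP [wZ Hc]]; rewrite -last_letter_u (last_letter_connect Hc).
by symmetry; apply: last_letter_over01; [rewrite inE in Hw | right; exact: has_nonzero].
Qed.

Lemma path_of_cyclesP cs : path_of_cycles u cs <-> cs = mkseq path_cycle t.
Proof.
split.
  case=> i [_ /in_petal_label Ei [vs]]; rewrite Ei -path_cycle_last.
  exact: Bpath_unique.
move=> ->; exists (nth Z a t.-1); split.
- by rewrite lt0n nth_a_neq0 ?last_lt_size_a.
- exact: in_petal_u.
- by exists (mkseq base_word t); rewrite -path_cycle_last; exact: Bpath_path_cycles.
Qed.

End PathOfCycles.

Theorem lemma4p11 (p n : nat) (hp : (1 <= p)%N) (hn : (1 <= n)%N)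
  (u : n.-tuple 'I_p.+1) (hu : u != zero_word p n)
  (k : nat) (a : seq 'I_p.+1) (us : seq (seq 'I_p.+1))
  (hsize : size a = size us)
  (ha : all (fun x : 'I_p.+1 => (0 < x)%N) a)
  (hadj : forall j, (j.+1 < size a)%N -> nth ord0 a j != nth ord0 a j.+1)
  (hus : forall j, (j < size a)%N ->
           all (fun x => (x == ord0) || (x == nth ord0 a j)) (nth [::] us j))
  (hdec : val u = nseq k ord0 ++ join_blocks a us) :
  let t := size a in
  (* N j = N_{j+1} of the paper (0-based index j) *)
  let N := fun j => (k + j.+1 + \sum_(l < j.+1) size (nth [::] us l))%N in
  (* P j = the (j+1)-th cycle of the path in the paper's 1-based numbering *)
  let P := fun j : nat =>
    ((nth ord0 a j,
      [set v : n.-tuple 'I_p.+1 |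
         all (fun x => (x == ord0) || (x == nth ord0 a j)) (take (N j) v)
         && (drop (N j) v == join_blocks (drop j.+1 a) (drop j.+1 us))]) : ecycle p n) in
  (forall cs, path_of_cycles u cs <-> cs = mkseq P t) /\
  (forall cs, path_of_cycles u cs ->
     size cs = t /\ map (@cycle_length p n) cs = mkseq (fun j => 2 ^ N j) t) /\
  P t.-1 = Ccyc n (nth ord0 a t.-1) /\
  2 ^ N t.-1 = 2 ^ n.
Proof.
move=> t N P.
have -> : P = path_cycle n k a us by [].
have EN j : N j = prefix_len k us j.+1 by [].
have cyclesP := path_of_cyclesP hu hsize ha hadj hus hdec.
split; [exact: cyclesP | split; [|split]].
- move=> cs /cyclesP ->; rewrite size_mkseq; split => //.
  rewrite -map_comp; apply/eq_in_map => j; rewrite mem_iota => /andP [_ Hj].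
  by rewrite /= /cycle_length (card_path_cycle hu hsize ha hdec Hj) EN.
- exact: path_cycle_last hu hsize ha hdec.
- by rewrite EN prednK ?(size_a_gt0 hu hdec) ?(prefix_len_size hu hsize ha hdec).
Qed.
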